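(* Let $C\in\mathbb{R}^{n\times n}$ be symmetric and let $(Z,k)$ be an optimal solution of $$\max_{Z,k}\ \langle C,Z\rangle-\tfrac12k^Tk\quad\text{s.t. } Z_{ii}=k_i\ (i=1,\dots,n),\ Z\succeq0.$$ Define $w\in\mathbb{R}^n$ by $w_i=Z_{ii}$. Then $w$ is an optimal solution of $$\min_{w\in\mathbb{R}^n}\ \tfrac12w^Tw\quad\text{s.t. } \operatorname{Diag}(w)\succeq C.$$
   Context: $\operatorname{Diag}(w)$ is the diagonal matrix with diagonal $w$; $\langle C,Z\rangle=\operatorname{tr}(CZ)$. *)

From mathcomp Require Import all_boot all_order all_algebra.
From mathcomp Require Import reals.
Set Implicit Arguments. Unset Strict Implicit. Unset Printing Implicit Defensive.
Import Order.TTheory GRing.Theory Num.Theory.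
Local Open Scope ring_scope.

Definition psd (R : realType) (n : nat) (A : 'M[R]_n) : Prop :=
  A^T = A /\ forall x : 'cV[R]_n, 0 <= (x^T *m A *m x) 0 0.

Definition frob (R : realType) (n : nat) (C Z : 'M[R]_n) : R := \tr (C *m Z).

Definition sqnorm (R : realType) (n : nat) (k : 'cV[R]_n) : R :=
  \sum_(i < n) k i 0 ^+ 2.

Definition primal_feasible (R : realType) (n : nat) (Z : 'M[R]_n) (k : 'cV[R]_n) : Prop :=
  (forall i : 'I_n, Z i i = k i 0) /\ psd Z.

Definition primal_obj (R : realType) (n : nat) (C Z : 'M[R]_n) (k : 'cV[R]_n) : R :=
  frob C Z - sqnorm k / 2.

Definition primal_optimal (R : realType) (n : nat) (C Z : 'M[R]_n) (k : 'cV[R]_n) : Prop :=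
  primal_feasible Z k /\
  forall (Z' : 'M[R]_n) (k' : 'cV[R]_n), primal_feasible Z' k' ->
    primal_obj C Z' k' <= primal_obj C Z k.

Definition dual_feasible (R : realType) (n : nat) (C : 'M[R]_n) (w : 'cV[R]_n) : Prop :=
  psd (diag_mx w^T - C).

Definition dual_optimal (R : realType) (n : nat) (C : 'M[R]_n) (w : 'cV[R]_n) : Prop :=
  dual_feasible C w /\
  forall w' : 'cV[R]_n, dual_feasible C w' -> sqnorm w / 2 <= sqnorm w' / 2.

(* Since k = diag Z is forced, Z maximises f(Z') = <C,Z'> - |diag Z'|^2/2 over
   the psd cone. Comparing f(Z) with f(tZ), t >= 0, gives |w|^2 <= <C,Z>;
   comparing it with f(Z + s x x^T) for small s > 0 gives x^T C x <= sum_i w_i x_i^2,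
   i.e. Diag(w) >= C. For a dual feasible w', weak duality <Diag(w') - C, Z> >= 0
   (a psd Z is a sum of rank-one matrices v v^T, by symmetric Gaussian elimination)
   reads <C,Z> <= w'.w <= (|w'|^2 + |w|^2)/2, whence |w|^2 <= |w'|^2. *)

From mathcomp Require Import all_boot all_order all_algebra.
From mathcomp Require Import reals ring lra.
Import Order.TTheory GRing.Theory Num.Theory.
Set Implicit Arguments. Unset Strict Implicit. Unset Printing Implicit Defensive.
Local Open Scope ring_scope.

Section ScalarInequalities.
Variable R : realFieldType.

Lemma affine_ge0_slope0 (a b : R) : (forall t, 0 <= a + t * b) -> b = 0.
Proof.
move=> ge0; apply/eqP; apply: contraT => b_neq0.
have := ge0 (- (a + 1) / b); rewrite divfK //; lra.
Qed.

Lemma le_of_max_at_one (a b : R) : 0 <= b ->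
  (forall t, 0 <= t -> t * a - t ^+ 2 * b / 2 <= a - b / 2) -> b <= a.
Proof.
move=> b_ge0 max1; have a_ge : b / 2 <= a by have := max1 0 (lexx 0); lra.
rewrite leNgt; apply/negP => lt_ab.
have b_gt0 : 0 < b by lra.
(* at the maximiser t = a/b of the left side the hypothesis reads (a - b)^2 <= 0 *)
pose t := a / b.
have tb : t * b = a by rewrite /t divfK ?gt_eqF.
have t_ge0 : 0 <= t by rewrite divr_ge0 //; lra.
have := max1 t t_ge0; nra.
Qed.

Lemma le0_of_mul_le_sqr (e q : R) :
  (forall s, 0 < s -> s * e <= s ^+ 2 * q) -> e <= 0.
Proof.
move=> le_sq; have le_eq s : 0 < s -> e <= s * q.
  by move=> s_gt0; rewrite -(ler_pM2l s_gt0) mulrA -expr2 le_sq.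
rewrite leNgt; apply/negP => e_gt0.
have q1_gt0 : 0 < `|q| + 1 by rewrite ltr_wpDl.
pose s := e / (`|q| + 1).
have s_gt0 : 0 < s by rewrite divr_gt0.
have se : s * (`|q| + 1) = e by rewrite /s divfK ?gt_eqF.
have := ler_wpM2l (ltW s_gt0) (ler_norm q).
have := le_eq s s_gt0; lra.
Qed.

End ScalarInequalities.

Section BilinearForms.
Variables (R : comPzRingType) (n : nat).
Implicit Types (A B : 'M[R]_n) (x y v : 'cV[R]_n).

Definition bform A x y : R := (x^T *m A *m y) 0 0.
Definition qform A x : R := bform A x x.

Lemma bformDl A x y z : bform A (x + y) z = bform A x z + bform A y z.
Proof. by rewrite /bform linearD /= !mulmxDl mxE. Qed.

Lemma bformDr A x y z : bform A x (y + z) = bform A x y + bform A x z.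
Proof. by rewrite /bform mulmxDr mxE. Qed.

Lemma bformZl A a x y : bform A (a *: x) y = a * bform A x y.
Proof. by rewrite /bform linearZ /= -!scalemxAl mxE. Qed.

Lemma bformZr A a x y : bform A x (a *: y) = a * bform A x y.
Proof. by rewrite /bform -scalemxAr mxE. Qed.

Lemma bformDm A B x y : bform (A + B) x y = bform A x y + bform B x y.
Proof. by rewrite /bform mulmxDr mulmxDl mxE. Qed.

Lemma bformBm A B x y : bform (A - B) x y = bform A x y - bform B x y.
Proof. by rewrite /bform mulmxBr mulmxBl !mxE. Qed.

Lemma bformZm A a x y : bform (a *: A) x y = a * bform A x y.
Proof. by rewrite /bform -scalemxAr -scalemxAl mxE. Qed.

Lemma bformC A x y : A^T = A -> bform A x y = bform A y x.
Proof.
move=> symA; rewrite /bform -[in RHS]symA -[in RHS](trmxK x) -mulmxA -!trmx_mul.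
by rewrite [RHS]mxE.
Qed.

Lemma bform_delta A i j : bform A (delta_mx i 0) (delta_mx j 0) = A i j.
Proof. by rewrite /bform trmx_delta -rowE -colE !mxE. Qed.

Lemma qformD_delta A x t p : A^T = A ->
  qform A (x + t *: delta_mx p 0) =
  qform A x + 2 * t * bform A (delta_mx p 0) x + t ^+ 2 * A p p.
Proof.
move=> symA; rewrite /qform bformDl !bformDr !bformZl !bformZr bform_delta.
by rewrite (bformC _ x) //; ring.
Qed.

Lemma qform_rank1 v x : qform (v *m v^T) x = (v^T *m x) 0 0 ^+ 2.
Proof.
rewrite /qform /bform mulmxA -mulmxA [LHS]mxE big_ord1 expr2.
by rewrite -[x^T *m v]trmxK trmx_mul trmxK [X in X * _]mxE.
Qed.

End BilinearForms.

Section PositiveSemidefinite.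
Variables (R : realType) (n : nat).
Implicit Types (A Z : 'M[R]_n) (x v : 'cV[R]_n).

Lemma psd_qform_ge0 A : psd A -> forall x, 0 <= qform A x.
Proof. by case. Qed.

Lemma psd_diag_ge0 A i : psd A -> 0 <= A i i.
Proof. by move=> /psd_qform_ge0 /(_ (delta_mx i 0)); rewrite /qform bform_delta. Qed.

Lemma psd_row0 A p j : psd A -> A p p = 0 -> A p j = 0.
Proof.
move=> A_psd App; suff : 2 * A p j = 0 by lra.
apply: (affine_ge0_slope0 (a := A j j)) => t.
have := psd_qform_ge0 A_psd (delta_mx j 0 + t *: delta_mx p 0).
rewrite qformD_delta ?(proj1 A_psd) // /qform !bform_delta App mulr0 addr0.
by rewrite mulrA (mulrC t).
Qed.

Lemma psdD A B : psd A -> psd B -> psd (A + B).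
Proof.
move=> [symA A_ge0] [symB B_ge0]; split; first by rewrite linearD /= symA symB.
move=> x; rewrite -[X in 0 <= X]/(qform _ x) /qform bformDm.
exact: addr_ge0 (A_ge0 x) (B_ge0 x).
Qed.

Lemma psdZ a A : 0 <= a -> psd A -> psd (a *: A).
Proof.
move=> a_ge0 [symA A_ge0]; split; first by rewrite linearZ /= symA.
move=> x; rewrite -[X in 0 <= X]/(qform _ x) /qform bformZm.
exact: mulr_ge0 a_ge0 (A_ge0 x).
Qed.

Lemma psd_rank1 v : psd (v *m v^T).
Proof.
split; first by rewrite trmx_mul trmxK.
by move=> x; rewrite -[X in 0 <= X]/(qform _ x) qform_rank1 sqr_ge0.
Qed.

Lemma qform_diag (d : 'rV[R]_n) x : qform (diag_mx d) x = \sum_i d 0 i * x i 0 ^+ 2.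
Proof.
rewrite /qform /bform mul_mx_diag mxE; apply: eq_bigr => i _.
by rewrite !mxE mulrAC mulrC expr2.
Qed.

(* One step of symmetric Gaussian elimination: Z - v v^T is the Schur complement
   of the pivot Z p p, and its row p vanishes. *)
Definition pivot_col Z p : 'cV[R]_n := (Num.sqrt (Z p p))^-1 *: col p Z.

Lemma psd_sub_pivot Z p : psd Z -> 0 < Z p p ->
  psd (Z - pivot_col Z p *m (pivot_col Z p)^T).
Proof.
move=> Z_psd d_gt0; have symZ := proj1 Z_psd.
set v := pivot_col Z p; set d := Z p p.
split; first by rewrite linearB /= trmx_mul trmxK symZ.
move=> x; set s := bform Z (delta_mx p 0) x.
have vx : (v^T *m x) 0 0 = (Num.sqrt d)^-1 * s.
  rewrite /v /pivot_col linearZ /= colE trmx_mul symZ trmx_delta -scalemxAl.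
  by rewrite [LHS]mxE /s /bform trmx_delta.
have shift_ge0 : 0 <= qform Z x - s ^+ 2 / d.
  suff <- : qform Z (x + (- s / d) *: delta_mx p 0) = qform Z x - s ^+ 2 / d.
    exact: psd_qform_ge0.
  by rewrite qformD_delta // -/s -/d; field; rewrite gt_eqF.
change (0 <= qform (Z - v *m v^T) x).
rewrite /qform bformBm -/(qform Z x) -/(qform (v *m v^T) x) qform_rank1 vx.
by rewrite exprMn exprVn sqr_sqrtr ?(ltW d_gt0) // mulrC.
Qed.

Lemma sub_pivot_entry Z p i j : 0 <= Z p p ->
  (Z - pivot_col Z p *m (pivot_col Z p)^T) i j = Z i j - Z i p * Z j p / Z p p.
Proof.
move=> d_ge0; rewrite !mxE big_ord1 !mxE; congr (_ - _).
by rewrite mulrACA -expr2 exprVn sqr_sqrtr // mulrC.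
Qed.

Lemma psd_sum_rank1 Z : psd Z -> exists vs : seq 'cV[R]_n, Z = \sum_(v <- vs) v *m v^T.
Proof.
suff decomp m Z' : psd Z' -> (forall i j : 'I_n, (m <= i)%N -> Z' i j = 0) ->
    exists vs : seq 'cV[R]_n, Z' = \sum_(v <- vs) v *m v^T.
  by move=> Z_psd; apply: (decomp n) => // i j; rewrite leqNgt ltn_ord.
elim: m Z' => [|m IH] Z' Z'_psd supp.
  by exists [::]; rewrite big_nil; apply/matrixP => i j; rewrite mxE supp.
have [le_nm | lt_mn] := leqP n m.
  by apply: IH => // i j /(leq_trans le_nm); rewrite leqNgt ltn_ord.
pose p := Ordinal lt_mn.
have supp_p (i j : 'I_n) : (m <= i)%N -> i != p -> Z' i j = 0.
  by move=> le_mi ne_ip; apply: supp; rewrite ltn_neqAle eq_sym le_mi andbT.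
have [Zpp0 | Zpp_neq0] := eqVneq (Z' p p) 0.
  apply: IH => // i j le_mi; have [-> | ] := eqVneq i p; first exact: psd_row0.
  exact: supp_p.
have Zpp_gt0 : 0 < Z' p p by rewrite lt_def Zpp_neq0 psd_diag_ge0.
have [vs Evs] : exists vs : seq 'cV[R]_n,
    Z' - pivot_col Z' p *m (pivot_col Z' p)^T = \sum_(v <- vs) v *m v^T.
  apply: IH; first exact: psd_sub_pivot.
  move=> i j le_mi; rewrite sub_pivot_entry ?ltW //.
  have [-> | ne_ip] := eqVneq i p.
    by rewrite mulrAC divff // mul1r -{1}(proj1 Z'_psd) mxE subrr.
  by rewrite (supp_p i j) ?(supp_p i p) // !mul0r subrr.
by exists (pivot_col Z' p :: vs); rewrite big_cons -Evs addrC subrK.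
Qed.

End PositiveSemidefinite.

Section FrobeniusProduct.
Variables (R : realType) (n : nat).
Implicit Types (A B Z : 'M[R]_n) (v : 'cV[R]_n).

Lemma frob_rank1 A v : frob A (v *m v^T) = qform A v.
Proof. by rewrite /frob mulmxA mxtrace_mulC mulmxA /mxtrace big_ord1. Qed.

Lemma frobDr A Z B : frob A (Z + B) = frob A Z + frob A B.
Proof. by rewrite /frob mulmxDr mxtraceD. Qed.

Lemma frobZr A a Z : frob A (a *: Z) = a * frob A Z.
Proof. by rewrite /frob -scalemxAr mxtraceZ. Qed.

Lemma frobBl A B Z : frob (A - B) Z = frob A Z - frob B Z.
Proof. by rewrite /frob mulmxBl linearB. Qed.

Lemma frob_diag (d : 'rV[R]_n) Z : frob (diag_mx d) Z = \sum_i d 0 i * Z i i.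
Proof. by rewrite /frob mul_diag_mx /mxtrace; apply: eq_bigr => i _; rewrite mxE. Qed.

Lemma frob_ge0 A Z : (forall x, 0 <= qform A x) -> psd Z -> 0 <= frob A Z.
Proof.
move=> A_ge0 /psd_sum_rank1[vs ->]; rewrite /frob mulmx_sumr raddf_sum.
by apply: sumr_ge0 => v _; rewrite -[X in 0 <= X]/(frob A (v *m v^T)) frob_rank1.
Qed.

End FrobeniusProduct.

Section DiagonalOfOptimum.
Variables (R : realType) (n : nat).

Definition diag_col (Z : 'M[R]_n) : 'cV[R]_n := \col_i Z i i.

Lemma sqnorm_diag_col (Z : 'M[R]_n) : sqnorm (diag_col Z) = \sum_i Z i i ^+ 2.
Proof. by apply: eq_bigr => i _; rewrite mxE. Qed.

Variables C Z : 'M[R]_n.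
Hypotheses (Z_psd : psd Z)
  (Z_opt : forall Z', psd Z' ->
     primal_obj C Z' (diag_col Z') <= primal_obj C Z (diag_col Z)).

Lemma sqnorm_diag_col_le_frob : sqnorm (diag_col Z) <= frob C Z.
Proof.
apply: le_of_max_at_one; first by apply: sumr_ge0 => i _; exact: sqr_ge0.
move=> t t_ge0; have := Z_opt (psdZ t_ge0 Z_psd); rewrite /primal_obj frobZr.
suff -> : sqnorm (diag_col (t *: Z)) = t ^+ 2 * sqnorm (diag_col Z) by [].
by rewrite !sqnorm_diag_col mulr_sumr; apply: eq_bigr => i _; rewrite mxE exprMn.
Qed.

Lemma dual_feasible_diag_col : C^T = C -> dual_feasible C (diag_col Z).
Proof.
move=> symC; split; first by rewrite linearB /= tr_diag_mx symC.
move=> x; change (0 <= qform (diag_mx (diag_col Z)^T - C) x).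
rewrite /qform bformBm -!/(qform _ x) qform_diag subr_ge0 -subr_le0.
set W := \sum_i _; set q := \sum_i x i 0 ^+ 4.
apply: (le0_of_mul_le_sqr (q := q / 2)) => s s_gt0.
have := Z_opt (psdD Z_psd (psdZ (ltW s_gt0) (psd_rank1 x))).
rewrite /primal_obj frobDr frobZr frob_rank1 !sqnorm_diag_col.
have -> : \sum_i (Z + s *: (x *m x^T)) i i ^+ 2 =
    \sum_i Z i i ^+ 2 + 2 * s * W + s ^+ 2 * q.
  rewrite /W /q !mulr_sumr -!big_split /=; apply: eq_bigr => i _.
  by rewrite !mxE big_ord1 !mxE; ring.
lra.
Qed.

Lemma sqnorm_diag_col_le_dual w : dual_feasible C w -> sqnorm (diag_col Z) <= sqnorm w.
Proof.
move=> w_feas; have := frob_ge0 (psd_qform_ge0 w_feas) Z_psd.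
rewrite frobBl frob_diag.
have amgm : \sum_i w^T 0 i * Z i i <= (sqnorm w + sqnorm (diag_col Z)) / 2.
  rewrite sqnorm_diag_col /sqnorm -big_split mulr_suml /=; apply: ler_sum => i _.
  by rewrite mxE; have := sqr_ge0 (w i 0 - Z i i); rewrite sqrrB; lra.
have := sqnorm_diag_col_le_frob; lra.
Qed.

End DiagonalOfOptimum.

Theorem lemmaC2 (R : realType) (n : nat) (C Z : 'M[R]_n) (k : 'cV[R]_n) :
  C^T = C ->
  primal_optimal C Z k ->
  dual_optimal C (\col_(i < n) Z i i).
Proof.
move=> symC [[diagZ Z_psd] Z_opt].
have k_diag : k = diag_col Z by apply/matrixP => i j; rewrite ord1 mxE diagZ.
have Z_opt' Z' : psd Z' -> primal_obj C Z' (diag_col Z') <= primal_obj C Z (diag_col Z).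
  by move=> Z'_psd; rewrite -k_diag; apply: Z_opt; split => // i; rewrite mxE.
split; first exact: dual_feasible_diag_col.
by move=> w /(sqnorm_diag_col_le_dual Z_psd Z_opt'); lra.
Qed.
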